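(* Let $n\ge 3$ and let $K$ be a proper $4$-coloring of $H_2(n,n-1)$. (a) If $x_1,x_2,x_3,x_4$ are vertices forming a path of length $3$ (in this order) all of whose edges $(x_1,x_2),(x_2,x_3),(x_3,x_4)$ are transition edges for $K$, then $K(x_1),K(x_2),K(x_3),K(x_4)$ are pairwise distinct. (b) There is no simple path in $H_2(n,n-1)$ of length greater than $3$ all of whose edges are transition edges for $K$.
   Context: $H_2(n,n-1)$ is the simple undirected graph with vertex set $\mathbb{Z}_2^n$ in which $x,y$ are adjacent iff their Hamming distance is at least $n-1$. For a proper $k$-coloring $K$ of a simple graph, an edge $(x,y)$ is a transition edge for $K$ if swapping the colors of $x$ and $y$ (all other colors unchanged) yields again a proper $k$-coloring. *)

From mathcomp Require Import all_boot.
Set Implicit Arguments. Unset Strict Implicit. Unset Printing Implicit Defensive.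

Definition vert (n : nat) : finType := {ffun 'I_n -> bool}.

Definition hamming n (x y : vert n) : nat := #|[set i : 'I_n | x i != y i]|.

Definition H2adj n : rel (vert n) := fun x y => n.-1 <= hamming x y.

Definition proper_col n k (K : vert n -> 'I_k) : bool :=
  [forall x, forall y, H2adj x y ==> (K x != K y)].

Definition swap_col n k (K : vert n -> 'I_k) (x y : vert n) : vert n -> 'I_k :=
  fun z => if z == x then K y else if z == y then K x else K z.

Definition transition_edge n k (K : vert n -> 'I_k) (x y : vert n) : bool :=
  H2adj x y && proper_col (swap_col K x y).

From mathcomp Require Import all_boot.

(* Swapping the colours of a transition edge (x, y) keeps the colouring proper
   exactly when no neighbour of y other than x has colour K x, and vice versa.
   On a transition path x1 x2 x3 x4 this makes K x1, K x2, K x3 distinct and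
   K x4 different from K x2, K x3.  If K x4 = K x1, pick a neighbour w of x2
   (every vertex has n + 1 >= 4 neighbours) and w' = w + x2 + x3, which is
   adjacent to w and to x3: both w and w' are then forced to take the fourth
   colour.  On a transition path x1 ... x5, part (a) forces K x5 = K x1, and the
   vertex x2 + x3 + x4, adjacent to x2 and x4, cannot be coloured. *)

Set Implicit Arguments. Unset Strict Implicit.

Section Hamming.
Variable n : nat.
Implicit Types (a b c d x y : vert n) (S : {set 'I_n}).

Lemma hammingC x y : hamming x y = hamming y x.
Proof. by apply: eq_card => i; rewrite !inE eq_sym. Qed.

Lemma H2adjC x y : H2adj x y = H2adj y x.
Proof. by rewrite /H2adj hammingC. Qed.

Lemma H2adj_neq x y : 1 < n -> H2adj x y -> x != y.
Proof.
move=> n_gt1; apply: contraTneq => ->.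
rewrite /H2adj /hamming (_ : [set i | y i != y i] = set0) ?cards0.
  by rewrite -ltnNge; case: n n_gt1 => [|[]].
by apply/setP => i; rewrite !inE eqxx.
Qed.

Definition xor3 a b c : vert n := [ffun i => a i (+) b i (+) c i].

Lemma H2adj_xor3l a b c : H2adj (xor3 a b c) a = H2adj b c.
Proof.
rewrite /H2adj /hamming; congr (_ <= _); apply: eq_card => i.
by rewrite !inE ffunE; case: (a i); case: (b i); case: (c i).
Qed.

Lemma H2adj_xor3r a b c : H2adj (xor3 a b c) c = H2adj a b.
Proof.
rewrite /H2adj /hamming; congr (_ <= _); apply: eq_card => i.
by rewrite !inE ffunE; case: (a i); case: (b i); case: (c i).
Qed.

Lemma eq_xor3 a b c d : (xor3 a b c == d) = (a == xor3 d b c).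
Proof.
apply/eqP/eqP => /ffunP E; apply/ffunP => i; move: (E i); rewrite !ffunE;
  by case: (a i); case: (b i); case: (c i); case: (d i).
Qed.

Lemma xor3_same b c : xor3 b b c = c.
Proof. by apply/ffunP => i; rewrite !ffunE; case: (b i); case: (c i). Qed.

Definition flip_on S x : vert n := [ffun i => (i \in S) (+) x i].

Lemma hamming_flip_on S x : hamming (flip_on S x) x = #|S|.
Proof.
by apply: eq_card => i; rewrite !inE ffunE; case: (i \in S); case: (x i).
Qed.

Lemma flip_on_inj x : injective (flip_on ^~ x).
Proof.
move=> S T /ffunP E; apply/setP => i; move: (E i); rewrite !ffunE.
by case: (i \in S); case: (i \in T); case: (x i).
Qed.

(* The flips of setT and of the [set~ i] are n + 1 distinct neighbours of x. *)
Lemma card_H2nbr x : n.+1 <= #|[set w | H2adj w x]|.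
Proof.
pose F := setT |: [set [set~ i] | i : 'I_n].
have cardF : #|F| = n.+1.
  have setT_notin : setT \notin [set [set~ i] | i : 'I_n].
    by apply/imsetP => -[i _ /setP/(_ i)]; rewrite !inE eqxx.
  rewrite cardsU1 setT_notin card_imset ?card_ord //.
  by move=> i j /setP/(_ i); rewrite !inE eqxx => /esym/negbFE/eqP.
rewrite -cardF -(card_imset _ (@flip_on_inj x)).
apply/subset_leq_card/subsetP => _ /imsetP[S FS ->].
rewrite inE /H2adj hamming_flip_on.
case/setU1P: FS => [->|/imsetP[i _ ->]].
  by rewrite cardsT card_ord leq_pred.
by rewrite cardsC1 card_ord.
Qed.

Lemma exists_H2nbr_notin x (s : seq (vert n)) :
  size s <= n -> exists2 w, H2adj w x & w \notin s.
Proof.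
move=> size_s; have : ~~ ([set w | H2adj w x] \subset s).
  apply: contraTN (card_H2nbr x) => sub; rewrite -ltnNge ltnS.
  exact: leq_trans (subset_leq_card sub) (leq_trans (card_size s) size_s).
by case/subsetPn => w; rewrite inE; exists w.
Qed.

End Hamming.

Section Transition.
Variables n k : nat.
Implicit Types K : vert n -> 'I_k.

Lemma proper_colP K x y : proper_col K -> H2adj x y -> K x != K y.
Proof. by move/forallP/(_ x)/forallP/(_ y)/implyP; apply. Qed.

Lemma eq_proper_col (K1 K2 : vert n -> 'I_k) :
  K1 =1 K2 -> proper_col K1 = proper_col K2.
Proof.
by move=> E; apply: eq_forallb => x; apply: eq_forallb => y; rewrite !E.
Qed.

Lemma swap_colC K x y : swap_col K x y =1 swap_col K y x.
Proof.
move=> z; rewrite /swap_col.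
by case: (eqVneq z x) => [->|_]; [case: eqVneq => [->|] | case: eqVneq].
Qed.

Lemma transition_edgeC K x y : transition_edge K x y = transition_edge K y x.
Proof.
by rewrite /transition_edge H2adjC (eq_proper_col (swap_colC K x y)).
Qed.

Lemma transition_edge_adj K x y : transition_edge K x y -> H2adj x y.
Proof. by case/andP. Qed.

Lemma transition_edge_nbr K x y z : 1 < n ->
  transition_edge K x y -> H2adj z y -> z != x -> K z != K x.
Proof.
move=> n_gt1 /andP[Axy /proper_colP P] Azy zx.
have yx : y != x by rewrite eq_sym H2adj_neq.
have := P _ _ Azy; rewrite /swap_col (negbTE zx) (negbTE (H2adj_neq n_gt1 Azy)).
by rewrite (negbTE yx) eqxx.
Qed.

End Transition.

Lemma eq_notin_uniq_full (T : finType) (s : seq T) (x y : T) :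
  #|T| <= (size s).+1 -> uniq s -> x \notin s -> y \notin s -> x = y.
Proof.
move=> card_T s_uniq xs ys; apply/eqP; apply: contraT => xy.
have /card_uniqP card_xys : uniq [:: x, y & s].
  by rewrite /= inE negb_or xy xs ys.
by have := max_card (mem [:: x, y & s]); rewrite card_xys /= leqNgt ltnS card_T.
Qed.

Section FourColouring.
Variables (n : nat) (K : vert n -> 'I_4).
Hypotheses (hn : 3 <= n) (hK : proper_col K).

Lemma transition_path4_colors_uniq x1 x2 x3 x4 :
  uniq [:: x1; x2; x3; x4] ->
  transition_edge K x1 x2 -> transition_edge K x2 x3 ->
  transition_edge K x3 x4 -> uniq [:: K x1; K x2; K x3; K x4].
Proof.
move=> U T12 T23 T34; have n_gt1 : 1 < n := ltnW hn.
have [x13 x24] : x1 != x3 /\ x2 != x4.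
  move: U; rewrite /= !inE !negb_or.
  by case/and4P => /and3P[_ -> _] /andP[_ ->] _ _.
have T32 : transition_edge K x3 x2 by rewrite transition_edgeC.
have T43 : transition_edge K x4 x3 by rewrite transition_edgeC.
have A12 := transition_edge_adj T12.
have A23 := transition_edge_adj T23.
have A34 := transition_edge_adj T34.
have k13 := transition_edge_nbr n_gt1 T32 A12 x13.
have A43 : H2adj x4 x3 by rewrite H2adjC.
have k24 : K x2 != K x4.
  by rewrite eq_sym (transition_edge_nbr n_gt1 T23 A43) // eq_sym.
have k123 : uniq [:: K x1; K x2; K x3].
  by rewrite /= !inE !negb_or k13 !proper_colP.
have k14 : K x1 != K x4.
  apply/eqP => k14.
  have [w Aw] := exists_H2nbr_notin x2 (s := [:: x1; x3; xor3 x4 x2 x3]) hn.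
  rewrite !inE !negb_or => /and3P[w1 w3 w4].
  pose w' := xor3 w x2 x3.
  have Aw'3 : H2adj w' x3 by rewrite H2adj_xor3r.
  have Kw : K w \notin [:: K x1; K x2; K x3].
    by rewrite !inE !negb_or (transition_edge_nbr n_gt1 T12) //
      (transition_edge_nbr n_gt1 T32) // proper_colP.
  have Kw' : K w' \notin [:: K x1; K x2; K x3].
    rewrite !inE !negb_or k14 (transition_edge_nbr n_gt1 T43) ?eq_xor3 //.
    rewrite (transition_edge_nbr n_gt1 T23) ?eq_xor3 ?xor3_same //.
    exact: proper_colP.
  have Aww' : H2adj w w' by rewrite H2adjC H2adj_xor3l.
  have := proper_colP hK Aww'.
  by rewrite (eq_notin_uniq_full _ k123 Kw Kw') ?card_ord ?eqxx.
by rewrite /= !inE !negb_or k13 k14 k24 !proper_colP.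
Qed.

Lemma no_transition_path5 x1 x2 x3 x4 x5 :
  uniq [:: x1; x2; x3; x4; x5] ->
  transition_edge K x1 x2 -> transition_edge K x2 x3 ->
  transition_edge K x3 x4 -> transition_edge K x4 x5 -> False.
Proof.
move=> U T12 T23 T34 T45; have n_gt1 : 1 < n := ltnW hn.
have U1 : uniq [:: x1; x2; x3; x4] := take_uniq 4 U.
have U2 : uniq [:: x2; x3; x4; x5] by case/andP: U.
have x15 : x1 != x5 by apply: contraTneq U => ->; rewrite /= !inE eqxx !orbT.
have x24 : x2 != x4 by apply: contraTneq U2 => ->; rewrite /= !inE eqxx !orbT.
have /andP[K1 K234] := transition_path4_colors_uniq U1 T12 T23 T34.
have /andP[K5 _] :
    (K x5 \notin [:: K x2; K x3; K x4]) && uniq [:: K x2; K x3; K x4].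
  by rewrite -rcons_uniq; apply: transition_path4_colors_uniq.
have eq_K c d :
    c \notin [:: K x2; K x3; K x4] -> d \notin [:: K x2; K x3; K x4] -> c = d.
  by apply: eq_notin_uniq_full; rewrite ?card_ord.
pose v := xor3 x2 x3 x4.
have Av2 : H2adj v x2 by rewrite H2adj_xor3l (transition_edge_adj T34).
have Av4 : H2adj v x4 by rewrite H2adj_xor3r (transition_edge_adj T23).
have Kv : K v \notin [:: K x2; K x3; K x4].
  rewrite !inE !negb_or (proper_colP hK Av2) (proper_colP hK Av4) andbT.
  have T32 : transition_edge K x3 x2 by rewrite transition_edgeC.
  by rewrite (transition_edge_nbr n_gt1 T32 Av2) // eq_xor3 xor3_same.
case: (eqVneq v x1) => [vx1 | vx1].
  have T54 : transition_edge K x5 x4 by rewrite transition_edgeC.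
  rewrite vx1 in Av4; have := transition_edge_nbr n_gt1 T54 Av4 x15.
  by rewrite (eq_K _ _ K1 K5) eqxx.
have := transition_edge_nbr n_gt1 T12 Av2 vx1.
by rewrite (eq_K _ _ Kv K1) eqxx.
Qed.

End FourColouring.

Theorem lemma5p5 (n : nat) (hn : 3 <= n) (K : vert n -> 'I_4)
  (hK : proper_col K) :
  (forall x1 x2 x3 x4 : vert n,
      uniq [:: x1; x2; x3; x4] ->
      transition_edge K x1 x2 -> transition_edge K x2 x3 ->
      transition_edge K x3 x4 ->
      uniq [:: K x1; K x2; K x3; K x4])
  /\
  (forall (x : vert n) (p : seq (vert n)),
      uniq (x :: p) -> path (transition_edge K) x p -> size p <= 3).
Proof.
split; first exact: transition_path4_colors_uniq.
move=> x [|x2 [|x3 [|x4 [|x5 p]]]] // U /and5P[T12 T23 T34 T45 _].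
have U5 : uniq [:: x; x2; x3; x4; x5].
  by apply: subseq_uniq U; apply: prefix_subseq.
by case: (no_transition_path5 hn hK U5 T12 T23 T34 T45).
Qed.
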